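(* Let $\rho>0$ and suppose that, for each value of $c^S>0$, the variable-window IPT thresholds satisfy $c_n^D=0$ for all $n\leq(1+\rho)\frac{c^S}{\underline{q}}$ (the values $c_n^D\geq0$ for larger $n$ being arbitrary). Then for every $f_1\in\mathcal{P}_1$, $$\limsup_{c^S\to\infty}\frac{E_{f_1,1}t_I}{c^S}\leq\frac{1}{q(f_1)}.$$
   Context: Setup. Let $\mathcal{A}=\{a_1,\dots,a_m\}$ be a finite alphabet and $\mathcal{P}$ the set of probability mass functions (p.m.f.s) on $\mathcal{A}$. $I(f\|f')=\sum_{a}f(a)\log\frac{f(a)}{f'(a)}$ is the Kullback–Leibler divergence. A known pre-change p.m.f. $f_0\in\mathcal{P}$ is fixed. $q:\mathcal{P}\to\mathbb{R}$ is quasiconcave and $L$-Lipschitz with respect to $\ell_1$, with $q_0:=q(f_0)<0<\underline{q}$, and the set of possible post-change p.m.f.s $\mathcal{P}_1$ is a nonempty subset of $\{f: q(f)\geq\underline{q}\}$. Under $P_{f_1,1}$ (expectation $E_{f_1,1}$) the observations $X_1,X_2,\dots$ are i.i.d. $f_1$. For $i\leq j$, $\hat f_{X_i^j}$ is the empirical p.m.f. of $X_i,\dots,X_j$. Variable-window IPT. Parameters: $c^S>0$ and a sequence $(c_n^D)_{n\geq1}$ of nonnegative thresholds. For $n\geq1$ let $f_n^*=\arg\min_{f\in\mathcal{P}:\,q(f)\geq c^S/n}I(f\|f_0)$. Put $Q(i,j)=(j-i+1)q(\hat f_{X_i^j})$ for $i\leq j$ and $Q(j+1,j)=0$. Set $\tau_1=1$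 and for $k\geq1$: $S_k=\max_{\tau_k\leq i\leq k+1}Q(i,k)$, with $i_k$ a maximizing index and $n_k=k-i_k+1$; $D_k=I(\hat f_{X_{i_k}^k}\|f_{n_k}^* )$; $\tau_{k+1}=k+1$ if $S_k\geq c^S$ and $D_k<c^D_{n_k}$ (restart), and $\tau_{k+1}=\tau_k$ otherwise. The IPT stopping time is $t_I=\inf\{k: S_k\geq c^S\text{ and }D_k\geq c^D_{n_k}\}$. *)

(* real numbers from Stdlib Reals.
   Alphabet A = {0,...,m-1} (symbol a_{i+1} is coded by the nat i).
   A p.m.f. on A is a function f : nat -> R (only values at a < m matter). *)
From Stdlib Require Import Reals Lra Lia List Arith.
Open Scope R_scope.

Fixpoint rsum (m : nat) (F : nat -> R) : R :=
  match m with
  | O => 0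
  | S k => rsum k F + F k
  end.

Definition is_pmf (m : nat) (f : nat -> R) : Prop :=
  (forall a, (a < m)%nat -> 0 <= f a) /\ rsum m f = 1.

Definition l1 (m : nat) (f g : nat -> R) : R := rsum m (fun a => Rabs (f a - g a)).

Definition quasiconcave (m : nat) (q : (nat -> R) -> R) : Prop :=
  forall f g lam, is_pmf m f -> is_pmf m g -> 0 <= lam <= 1 ->
    Rmin (q f) (q g) <= q (fun a => lam * f a + (1 - lam) * g a).

Definition lipschitz_l1 (m : nat) (q : (nat -> R) -> R) (L : R) : Prop :=
  forall f g, is_pmf m f -> is_pmf m g -> Rabs (q f - q g) <= L * l1 m f g.

(* Extended-real valued Kullback-Leibler divergence: None stands for +infinity.
   Conventions: 0 log(0/x) = 0 ; g a > 0 = h a gives +infinity. *)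
Fixpoint kl_aux (m : nat) (g h : nat -> R) : option R :=
  match m with
  | O => Some 0
  | S k =>
      match kl_aux k g h with
      | None => None
      | Some s =>
          if Rlt_dec 0 (g k) then
            (if Rlt_dec 0 (h k) then Some (s + g k * ln (g k / h k)) else None)
          else Some s
      end
  end.

Definition KL (m : nat) (g h : nat -> R) : option R := kl_aux m g h.

Definition ext_le (x y : option R) : Prop :=
  match y with
  | None => True
  | Some b => match x with Some a => a <= b | None => False end
  end.

Definition ext_geb (x : option R) (c : R) : bool :=
  match x with
  | None => true
  | Some v => if Rle_dec c v then true else false
  end.

Definition is_argmin (m : nat) (q : (nat -> R) -> R) (f0 : nat -> R) (c : R)
  (fs : nat -> R) : Prop :=
  (exists f, is_pmf m f /\ c <= q f) ->
  is_pmf m fs /\ c <= q fs /\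
  (forall f, is_pmf m f -> c <= q f -> ext_le (KL m fs f0) (KL m f f0)).

Definition emp (w : list nat) : nat -> R :=
  fun a => INR (count_occ Nat.eq_dec w a) / INR (length w).

(* window X_i,...,X_k of the observations xs = [X_1; ...; X_k] (1-based) *)
Definition window (i k : nat) (xs : list nat) : list nat :=
  firstn (k + 1 - i) (skipn (i - 1) xs).

Definition Qstat (q : (nat -> R) -> R) (i k : nat) (xs : list nat) : R :=
  if Nat.leb i k then INR (k + 1 - i) * q (emp (window i k xs)) else 0.

Definition is_max_selector (q : (nat -> R) -> R) (sel : nat -> list nat -> nat) : Prop :=
  forall tau xs, (1 <= tau <= length xs + 1)%nat ->
    (tau <= sel tau xs <= length xs + 1)%nat /\
    (forall i, (tau <= i <= length xs + 1)%nat ->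
       Qstat q i (length xs) xs <= Qstat q (sel tau xs) (length xs) xs).

(* Variable-window IPT.  ipt_state ... k xs = (stopped, tau_{k+1}) where
   stopped = true iff t_I <= k; only the first k entries of xs are read. *)
Fixpoint ipt_state (m : nat) (q : (nat -> R) -> R) (cS : R)
  (cD : nat -> R) (fstar : nat -> nat -> R) (sel : nat -> list nat -> nat)
  (k : nat) (xs : list nat) : bool * nat :=
  match k with
  | O => (false, 1%nat)
  | S k' =>
      let (stopped, tau) := ipt_state m q cS cD fstar sel k' xs in
      if stopped then (true, tau)
      else
        let pre := firstn k xs in
        let ik := sel tau pre in
        let nk := (k + 1 - ik)%nat in
        let Sk := Qstat q ik k pre in
        let Dge := ext_geb (KL m (emp (window ik k pre)) (fstar nk)) (cD nk) in
        if Rle_dec cS Sk then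
          (if Dge then (true, tau) else (false, (k + 1)%nat))
        else (false, tau)
  end.

Fixpoint all_seqs (m k : nat) : list (list nat) :=
  match k with
  | O => nil :: nil
  | S k' => flat_map (fun xs => map (fun a => xs ++ a :: nil) (seq 0 m)) (all_seqs m k')
  end.

Definition prod_prob (f : nat -> R) (xs : list nat) : R :=
  fold_right (fun a r => f a * r) 1 xs.

Definition prob_not_stopped (m : nat) (q : (nat -> R) -> R) (cS : R)
  (cD : nat -> R) (fstar : nat -> nat -> R) (sel : nat -> list nat -> nat)
  (f1 : nat -> R) (k : nat) : R :=
  fold_right Rplus 0
    (map (fun xs => if fst (ipt_state m q cS cD fstar sel k xs) then 0
                    else prod_prob f1 xs) (all_seqs m k)).

(* partial sum sum_{k=0}^{N} P(t_I > k);  E t_I = sup_N of these *)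
Definition ET_partial (m : nat) (q : (nat -> R) -> R) (cS : R)
  (cD : nat -> R) (fstar : nat -> nat -> R) (sel : nat -> list nat -> nat)
  (f1 : nat -> R) (N : nat) : R :=
  rsum (S N) (prob_not_stopped m q cS cD fstar sel f1).

From Stdlib Require Import Reals Lra Lia List Arith ZArith.
Open Scope R_scope.

(* Fix an integer l >= 1 and a step h ~ c^S / (l q1'), where q1' < q(f1), and
   consider the windows of length n = l h starting at the multiples of h.  A
   window is "crossing" when its statistic n q(emp) is at least c^S.
   - Dynamics.  As long as the current window is at most (l+1) h long, the
     divergence threshold c^D vanishes and D_k >= 0 (Gibbs), so a crossing
     detected there stops the test; in particular a restart only happens after
     a window longer than (l+1) h.  From this: if the first window crosses, the
     test stops by time n; if l+1 consecutive windows cross, the test stops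
     before the end of the last one.
   - Probability.  A window is non-crossing only if the empirical p.m.f. is
     gamma-far from f1 in some coordinate; Chebyshev bounds this by
     m / (n gamma^2).  Blocks of 2n observations are independent, so
     P(t_I > k) decays geometrically in k / 2n, and summing the tails gives
     E t_I <= n (1 + O(1 / n)) <= c^S / q1' + O(1).
   - Finally q1' is taken as q(f1) l / (l+1) with l large, and c^S large makes
     all windows of length (l+1) h fall in the zero-threshold range. *)

Lemma rsum_ext m F G : (forall a, (a < m)%nat -> F a = G a) -> rsum m F = rsum m G.
Proof. induction m; simpl; intros H; auto. rewrite IHm, H; auto; intros; apply H; lia. Qed.

Lemma rsum_le m F G : (forall a, (a < m)%nat -> F a <= G a) -> rsum m F <= rsum m G.
Proof.
  induction m; simpl; intros H; [lra|].
  assert (H1 := H m (Nat.lt_succ_diag_r m)).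
  assert (rsum m F <= rsum m G) by (apply IHm; intros; apply H; lia). lra.
Qed.

Lemma rsum_plus m F G : rsum m (fun a => F a + G a) = rsum m F + rsum m G.
Proof. induction m; simpl; [lra|]. rewrite IHm; lra. Qed.

Lemma rsum_scal m c F : rsum m (fun a => c * F a) = c * rsum m F.
Proof. induction m; simpl; [lra|]. rewrite IHm; lra. Qed.

Lemma rsum_const m c : rsum m (fun _ => c) = INR m * c.
Proof. induction m; simpl rsum; [simpl; lra|]. rewrite IHm, S_INR; lra. Qed.

Lemma rsum_nonneg m F : (forall a, (a < m)%nat -> 0 <= F a) -> 0 <= rsum m F.
Proof.
  intros H. replace 0 with (rsum m (fun _ => 0)) by (rewrite rsum_const; lra).
  apply rsum_le; auto.
Qed.

Lemma rsum_ge_term m F a :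
  (forall b, (b < m)%nat -> 0 <= F b) -> (a < m)%nat -> F a <= rsum m F.
Proof.
  induction m; intros H Ha; [lia|]. simpl.
  assert (0 <= rsum m F) by (apply rsum_nonneg; intros; apply H; lia).
  destruct (Nat.eq_dec a m) as [->|Hne]; [lra|].
  assert (F a <= rsum m F) by (apply IHm; [intros; apply H; lia| lia]).
  assert (0 <= F m) by (apply H; lia). lra.
Qed.

Lemma rsum_add m k F : rsum (m + k) F = rsum m F + rsum k (fun j => F (m + j)%nat).
Proof.
  induction k; simpl; [rewrite Nat.add_0_r; lra|].
  rewrite Nat.add_succ_r; simpl. rewrite IHk; lra.
Qed.

Lemma rsum_mono_len N N' F : (N <= N')%nat -> (forall k, 0 <= F k) -> rsum N F <= rsum N' F.
Proof.
  intros H HF. replace N' with (N + (N' - N))%nat by lia. rewrite rsum_add.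
  assert (0 <= rsum (N' - N) (fun j => F (N + j)%nat)) by (apply rsum_nonneg; auto). lra.
Qed.

Lemma rsum_indic m F a : (a < m)%nat ->
  rsum m (fun c => F c * (if Nat.eq_dec c a then 1 else 0)) = F a.
Proof.
  induction m; intros Ha; [lia|]. simpl.
  destruct (Nat.eq_dec m a) as [->|Hne].
  - replace (rsum a (fun c => F c * (if Nat.eq_dec c a then 1 else 0)))
      with (rsum a (fun _ => 0)); [rewrite rsum_const; lra|].
    apply rsum_ext; intros c Hc. destruct (Nat.eq_dec c a); [lia|lra].
  - rewrite IHm by lia. lra.
Qed.

Definition lsum {A : Type} (l : list A) (g : A -> R) : R := fold_right Rplus 0 (map g l).

Lemma lsum_app {A} (l1 l2 : list A) g : lsum (l1 ++ l2) g = lsum l1 g + lsum l2 g.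
Proof.
  unfold lsum. rewrite map_app, fold_right_app.
  induction l1; simpl; [lra|]. unfold lsum in IHl1. rewrite IHl1. lra.
Qed.

Lemma lsum_flat_map {A B} (l : list A) (h : A -> list B) g :
  lsum (flat_map h l) g = lsum l (fun x => lsum (h x) g).
Proof. induction l; simpl; auto. rewrite lsum_app, IHl. reflexivity. Qed.

Lemma lsum_map {A B} (l : list A) (k : A -> B) g : lsum (map k l) g = lsum l (fun x => g (k x)).
Proof. unfold lsum. rewrite map_map. reflexivity. Qed.

Lemma lsum_seq m g : lsum (seq 0 m) g = rsum m g.
Proof.
  induction m; [reflexivity|].
  rewrite seq_S, lsum_app, IHm. simpl. unfold lsum; simpl. lra.
Qed.

Lemma lsum_ext_in {A} (l : list A) g g' :
  (forall x, In x l -> g x = g' x) -> lsum l g = lsum l g'.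
Proof. induction l; simpl; intros H; auto. unfold lsum in *; simpl. rewrite H, IHl; auto. Qed.

Lemma lsum_le_in {A} (l : list A) g g' :
  (forall x, In x l -> g x <= g' x) -> lsum l g <= lsum l g'.
Proof.
  induction l; simpl; intros H; unfold lsum in *; simpl; [lra|].
  assert (H1 := H a (or_introl eq_refl)).
  assert (fold_right Rplus 0 (map g l) <= fold_right Rplus 0 (map g' l)) by (apply IHl; auto).
  lra.
Qed.

Lemma lsum_plus {A} (l : list A) g g' : lsum l (fun x => g x + g' x) = lsum l g + lsum l g'.
Proof. induction l; unfold lsum in *; simpl; [lra|]. rewrite IHl; lra. Qed.

Lemma lsum_scal {A} (l : list A) c g : lsum l (fun x => c * g x) = c * lsum l g.
Proof. induction l; unfold lsum in *; simpl; [lra|]. rewrite IHl; lra. Qed.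

Section Expectation.
Variable m : nat.
Variable f1 : nat -> R.
Hypothesis Hf1 : is_pmf m f1.

(* [Ex K F] is E F(X_1, ..., X_K) for X_i i.i.d. f1. *)
Definition Ex (K : nat) (F : list nat -> R) : R :=
  lsum (all_seqs m K) (fun xs => F xs * prod_prob f1 xs).

Lemma all_seqs_in K xs : In xs (all_seqs m K) ->
  length xs = K /\ forall a, In a xs -> (a < m)%nat.
Proof.
  revert xs; induction K; simpl; intros xs H.
  - destruct H as [<-|[]]. simpl; split; auto; intros a [].
  - apply in_flat_map in H. destruct H as [ys [Hys Hin]]. apply in_map_iff in Hin.
    destruct Hin as [a [<- Ha]]. apply in_seq in Ha. destruct (IHK ys Hys) as [Hl Hm].
    rewrite length_app; simpl; split; [lia|]. intros b Hb. apply in_app_or in Hb.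
    destruct Hb as [Hb|[<-|[]]]; [auto|lia].
Qed.

Lemma prod_prob_nonneg xs : (forall a, In a xs -> (a < m)%nat) -> 0 <= prod_prob f1 xs.
Proof.
  induction xs; simpl; intros H; [lra|]. apply Rmult_le_pos.
  - apply (proj1 Hf1); auto.
  - apply IHxs; auto.
Qed.

Lemma prod_prob_app xs a : prod_prob f1 (xs ++ a :: nil) = prod_prob f1 xs * f1 a.
Proof.
  unfold prod_prob. rewrite fold_right_app. simpl.
  induction xs; simpl; [lra|]. rewrite IHxs; lra.
Qed.

Lemma Ex_S K F : Ex (S K) F = Ex K (fun xs => rsum m (fun a => f1 a * F (xs ++ a :: nil))).
Proof.
  unfold Ex. simpl. rewrite lsum_flat_map. apply lsum_ext_in. intros xs _.
  rewrite lsum_map, lsum_seq, Rmult_comm, <- rsum_scal. apply rsum_ext; intros a _.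
  rewrite prod_prob_app. lra.
Qed.

Lemma Ex_ext K F G :
  (forall xs, length xs = K -> (forall a, In a xs -> (a < m)%nat) -> F xs = G xs) ->
  Ex K F = Ex K G.
Proof.
  intros H. unfold Ex. apply lsum_ext_in. intros xs Hin.
  destruct (all_seqs_in K xs Hin). rewrite H; auto.
Qed.

Lemma Ex_le K F G :
  (forall xs, length xs = K -> (forall a, In a xs -> (a < m)%nat) -> F xs <= G xs) ->
  Ex K F <= Ex K G.
Proof.
  intros H. unfold Ex. apply lsum_le_in. intros xs Hin.
  destruct (all_seqs_in K xs Hin). apply Rmult_le_compat_r; auto.
  apply prod_prob_nonneg; auto.
Qed.

Lemma Ex_plus K F G : Ex K (fun xs => F xs + G xs) = Ex K F + Ex K G.
Proof. unfold Ex. rewrite <- lsum_plus. apply lsum_ext_in; intros; lra. Qed.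

Lemma Ex_scal K c F : Ex K (fun xs => c * F xs) = c * Ex K F.
Proof. unfold Ex. rewrite <- lsum_scal. apply lsum_ext_in; intros; lra. Qed.

Lemma Ex_one K : Ex K (fun _ => 1) = 1.
Proof.
  induction K; [unfold Ex; simpl; unfold lsum; simpl; lra|].
  rewrite Ex_S. transitivity (Ex K (fun _ => 1)); [|exact IHK].
  apply Ex_ext; intros xs _ _.
  transitivity (rsum m f1); [apply rsum_ext; intros; lra|]. apply (proj2 Hf1).
Qed.

Lemma Ex_const K c : Ex K (fun _ => c) = c.
Proof.
  transitivity (c * Ex K (fun _ => 1)); [|rewrite Ex_one; lra].
  rewrite <- Ex_scal; apply Ex_ext; intros; lra.
Qed.

Lemma Ex_nonneg K F :
  (forall xs, length xs = K -> (forall a, In a xs -> (a < m)%nat) -> 0 <= F xs) ->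
  0 <= Ex K F.
Proof. intros H. rewrite <- (Ex_const K 0). apply Ex_le; auto. Qed.

Lemma Ex_rsum K L F :
  Ex K (fun xs => rsum L (fun i => F i xs)) = rsum L (fun i => Ex K (F i)).
Proof. induction L; simpl; [apply Ex_const|]. rewrite Ex_plus, IHL. reflexivity. Qed.

Lemma Ex_fact a b F G :
  Ex (a + b) (fun xs => F (firstn a xs) * G (skipn a xs)) = Ex a F * Ex b G.
Proof.
  revert G. induction b; intros G.
  - rewrite Nat.add_0_r. transitivity (Ex a (fun xs => G nil * F xs)).
    + apply Ex_ext; intros xs Hl _. rewrite firstn_all2 by lia. rewrite skipn_all2 by lia. lra.
    + rewrite Ex_scal. unfold Ex at 3; simpl; unfold lsum; simpl. unfold prod_prob; simpl. lra.
  - rewrite Nat.add_succ_r, Ex_S, Ex_S, <- IHb. apply Ex_ext; intros xs Hl _.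
    rewrite <- rsum_scal. apply rsum_ext; intros c _.
    rewrite firstn_app, skipn_app, Hl. replace (a - (a + b))%nat with 0%nat by lia.
    simpl. rewrite app_nil_r. lra.
Qed.

Lemma Ex_marg a b F : Ex (a + b) (fun xs => F (firstn a xs)) = Ex a F.
Proof.
  rewrite <- (Rmult_1_r (Ex a F)), <- (Ex_one b), <- Ex_fact.
  apply Ex_ext; intros; lra.
Qed.

Lemma Ex_shift a b G : Ex (a + b) (fun xs => G (skipn a xs)) = Ex b G.
Proof.
  rewrite <- (Rmult_1_l (Ex b G)), <- (Ex_one a), <- Ex_fact.
  apply Ex_ext; intros; lra.
Qed.

Definition dev (a : nat) (ys : list nat) : R :=
  INR (count_occ Nat.eq_dec ys a) - INR (length ys) * f1 a.

Lemma pmf_le1 a : (a < m)%nat -> 0 <= f1 a <= 1.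
Proof.
  intros Ha. split; [apply (proj1 Hf1); auto|].
  rewrite <- (proj2 Hf1). apply rsum_ge_term; auto. apply (proj1 Hf1).
Qed.

Lemma Ex_dev_sq K a : (a < m)%nat -> Ex K (fun ys => (dev a ys) ^ 2) <= INR K.
Proof.
  intros Ha. induction K; [unfold Ex; simpl; unfold lsum; simpl; unfold dev; simpl; lra|].
  rewrite Ex_S, S_INR.
  apply Rle_trans with (Ex K (fun ys => dev a ys ^ 2 + 1));
    [|rewrite Ex_plus, Ex_const; lra].
  apply Ex_le. intros xs _ _.
  set (e := fun c : nat => (if Nat.eq_dec c a then 1 else 0) - f1 a).
  assert (Hstep : forall c, dev a (xs ++ c :: nil) = dev a xs + e c).
  { intros c. unfold dev, e. rewrite count_occ_app, length_app, !plus_INR. simpl.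
    destruct (Nat.eq_dec c a); simpl; lra. }
  (* the increment e has mean 0 and second moment at most 1 *)
  assert (Hmean : rsum m (fun c => f1 c * e c) = 0).
  { unfold e. transitivity (rsum m (fun c => f1 c * (if Nat.eq_dec c a then 1 else 0))
                            + (- f1 a) * rsum m f1).
    - rewrite <- rsum_scal, <- rsum_plus. apply rsum_ext; intros; ring.
    - rewrite rsum_indic, (proj2 Hf1) by auto. ring. }
  assert (Hsecond : rsum m (fun c => f1 c * e c ^ 2) <= 1).
  { rewrite <- (proj2 Hf1). apply rsum_le; intros c Hc.
    destruct (pmf_le1 c Hc), (pmf_le1 a Ha).
    assert (e c ^ 2 <= 1) by (unfold e; destruct (Nat.eq_dec c a); nra). nra. }
  transitivity (dev a xs ^ 2 * rsum m f1 + 2 * dev a xs * rsum m (fun c => f1 c * e c)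
                + rsum m (fun c => f1 c * e c ^ 2)).
  - right. rewrite <- !rsum_scal, <- !rsum_plus. apply rsum_ext; intros c _.
    rewrite Hstep. ring.
  - rewrite Hmean, (proj2 Hf1). lra.
Qed.

End Expectation.

Lemma in_firstn_in (a : nat) n l : In a (firstn n l) -> In a l.
Proof. intros H. rewrite <- (firstn_skipn n l). apply in_or_app; auto. Qed.

Lemma in_skipn_in (a : nat) n l : In a (skipn n l) -> In a l.
Proof. intros H. rewrite <- (firstn_skipn n l). apply in_or_app; auto. Qed.

Lemma window_firstn (xs : list nat) c s t : (s + c <= t)%nat ->
  firstn c (skipn s (firstn t xs)) = firstn c (skipn s xs).
Proof. intros H. rewrite skipn_firstn_comm, firstn_firstn. f_equal. lia. Qed.

Lemma rsum_count m ys : (forall a, In a ys -> (a < m)%nat) ->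
  rsum m (fun a => INR (count_occ Nat.eq_dec ys a)) = INR (length ys).
Proof.
  induction ys as [|y ys IH]; intros H.
  - simpl. transitivity (rsum m (fun _ => 0)); [apply rsum_ext; reflexivity|].
    rewrite rsum_const; ring.
  - transitivity (rsum m (fun b => INR (count_occ Nat.eq_dec ys b)
                                  + (fun _ => 1) b * (if Nat.eq_dec b y then 1 else 0))).
    + apply rsum_ext; intros b _. simpl count_occ.
      destruct (Nat.eq_dec y b), (Nat.eq_dec b y); try rewrite S_INR; try lia; lra.
    + rewrite rsum_plus, IH, rsum_indic by (simpl in H; auto).
      change (length (y :: ys)) with (S (length ys)). rewrite S_INR; lra.
Qed.

Lemma emp_pmf m ys : ys <> nil -> (forall a, In a ys -> (a < m)%nat) -> is_pmf m (emp ys).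
Proof.
  intros Hne H. assert (Hl : 0 < INR (length ys)).
  { apply lt_0_INR. destruct ys; [congruence|simpl; lia]. }
  split.
  - intros a _. unfold emp.
    apply Rmult_le_pos; [apply pos_INR| apply Rlt_le, Rinv_0_lt_compat; auto].
  - unfold emp.
    transitivity (/ INR (length ys) * rsum m (fun a => INR (count_occ Nat.eq_dec ys a))).
    + rewrite <- rsum_scal. apply rsum_ext; intros; unfold Rdiv; ring.
    + rewrite rsum_count by auto. field. lra.
Qed.

(* Termwise  g log(g/h) >= g - h, so a finite partial KL sum dominates
   the partial sum of g - h. *)
Lemma kl_aux_lower k g h :
  (forall a, (a < k)%nat -> 0 <= g a) -> (forall a, (a < k)%nat -> 0 <= h a) ->
  match kl_aux k g h with Some s => rsum k (fun a => g a - h a) <= s | None => True end.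
Proof.
  induction k; intros Hg Hh; simpl; [lra|].
  assert (IH := IHk (fun a Ha => Hg a (Nat.lt_lt_succ_r _ _ Ha))
                    (fun a Ha => Hh a (Nat.lt_lt_succ_r _ _ Ha))).
  destruct (kl_aux k g h) as [s|]; auto.
  destruct (Rlt_dec 0 (g k)) as [Hgk|Hgk].
  - destruct (Rlt_dec 0 (h k)) as [Hhk|Hhk]; auto.
    assert (g k * ln (g k / h k) >= g k - h k).
    { set (u := ln (g k / h k)). assert (E : exp (- u) = h k / g k).
      { rewrite exp_Ropp. unfold u. rewrite exp_ln by (apply Rdiv_lt_0_compat; auto).
        field. split; lra. }
      assert (1 + - u <= exp (- u)) by apply exp_ineq1_le. rewrite E in H.
      assert (g k * (1 - u) <= h k).
      { replace (h k) with (g k * (h k / g k)) by (field; lra). apply Rmult_le_compat_l; lra. }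
      lra. }
    lra.
  - assert (g k = 0) by (assert (0 <= g k) by (apply Hg; lia); lra).
    assert (0 <= h k) by (apply Hh; lia). lra.
Qed.

Lemma gibbs m g h : is_pmf m g -> is_pmf m h -> ext_geb (KL m g h) 0 = true.
Proof.
  intros [Hg1 Hg2] [Hh1 Hh2]. assert (B := kl_aux_lower m g h Hg1 Hh1).
  unfold KL, ext_geb. destruct (kl_aux m g h) as [s|]; auto.
  assert (rsum m (fun a => g a - h a) = 0).
  { transitivity (rsum m g + (-1) * rsum m h).
    - rewrite <- rsum_scal, <- rsum_plus. apply rsum_ext; intros; ring.
    - rewrite Hg2, Hh2; ring. }
  destruct (Rle_dec 0 s); auto. lra.
Qed.

Lemma coord_le_of_sum_sq m (x : nat -> R) c : 0 < c ->
  rsum m (fun a => x a ^ 2) < c ^ 2 -> forall a, (a < m)%nat -> Rabs (x a) <= c.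
Proof.
  intros Hc Hs a Ha.
  assert (x a ^ 2 <= rsum m (fun a => x a ^ 2))
    by (apply (rsum_ge_term m (fun a => x a ^ 2)); auto; intros; apply pow2_ge_0).
  apply Rnot_lt_le. intros Hlt.
  assert (Rabs (x a) ^ 2 = x a ^ 2) by (rewrite RPow_abs; apply Rabs_right, Rle_ge, pow2_ge_0).
  assert (c ^ 2 < Rabs (x a) ^ 2) by (simpl; nra). lra.
Qed.

Lemma lipschitz_lower_bound m q Lip f g gam q1' : lipschitz_l1 m q Lip ->
  is_pmf m f -> is_pmf m g -> (forall a, (a < m)%nat -> Rabs (g a - f a) <= gam) ->
  (Rabs Lip + 1) * INR m * gam <= q f - q1' -> q1' <= q g.
Proof.
  intros HLip Hf Hg Hclose Hcond.
  assert (Hl1 : l1 m g f <= INR m * gam) by (unfold l1; rewrite <- rsum_const; apply rsum_le; auto).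
  assert (Hl10 : 0 <= l1 m g f) by (apply rsum_nonneg; intros; apply Rabs_pos).
  assert (HL := HLip g f Hg Hf).
  assert (Lip <= Rabs Lip) by apply RRle_abs.
  assert (Lip * l1 m g f <= (Rabs Lip + 1) * (INR m * gam)).
  { apply Rle_trans with ((Rabs Lip + 1) * l1 m g f).
    - apply Rmult_le_compat_r; lra.
    - apply Rmult_le_compat_l; [assert (0 <= Rabs Lip) by apply Rabs_pos; lra | exact Hl1]. }
  assert (q f - q g <= Rabs (q g - q f)) by (rewrite Rabs_minus_sym; apply RRle_abs).
  lra.
Qed.

Lemma tail_sum_bound (p : nat -> R) n pp N : (1 <= n)%nat -> 0 <= pp <= 1 / 2 ->
  (forall k, p k <= 1) -> (forall k, (n <= k)%nat -> p k <= pp) ->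
  (forall b k, (b * (2 * n) <= k)%nat -> p k <= pp ^ b) ->
  rsum (S N) p <= INR n * (1 + 5 * pp).
Proof.
  intros Hn [Hpp0 Hpp] Hp1 Hpn Hpb. set (B := (2 * n)%nat).
  assert (HnR : 0 <= INR n) by apply pos_INR.
  set (g := fun k : nat => if Nat.ltb k n then 1 else pp ^ (Nat.max 1 (k / B))).
  assert (Hg0 : forall k, 0 <= g k).
  { intros k; unfold g. destruct (Nat.ltb k n); [lra|]. apply pow_le; lra. }
  assert (Hpg : forall k, p k <= g k).
  { intros k. unfold g. destruct (Nat.ltb k n) eqn:E; [apply Hp1|]. apply Nat.ltb_ge in E.
    destruct (k / B)%nat as [|b] eqn:Eb; [simpl; rewrite Rmult_1_r; auto|].
    replace (Nat.max 1 (S b)) with (S b) by lia. apply Hpb.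
    rewrite <- Eb. assert (H := Nat.div_mod k B ltac:(unfold B; lia)).
    rewrite Nat.mul_comm. lia. }
  (* block-by-block: the first block costs n + n pp, block T costs 2 n pp^T *)
  assert (Hblocks : forall T, rsum (B * S T) g + 4 * INR n * pp ^ (S T) <= INR n + 5 * INR n * pp).
  { induction T.
    - replace (B * 1)%nat with (n + n)%nat by (unfold B; lia). rewrite rsum_add.
      assert (E1 : rsum n g = INR n).
      { rewrite <- (Rmult_1_r (INR n)), <- rsum_const. apply rsum_ext; intros k Hk. unfold g.
        replace (Nat.ltb k n) with true by (symmetry; apply Nat.ltb_lt; auto). reflexivity. }
      assert (E2 : rsum n (fun j => g (n + j)%nat) = INR n * pp).
      { rewrite <- rsum_const. apply rsum_ext; intros k Hk. unfold g.
        replace (Nat.ltb (n + k) n) with false by (symmetry; apply Nat.ltb_ge; lia).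
        rewrite (Nat.div_small (n + k) B) by (unfold B; lia). simpl. ring. }
      rewrite E1, E2. simpl. lra.
    - replace (B * S (S T))%nat with (B * S T + B)%nat by lia. rewrite rsum_add.
      assert (E2 : rsum B (fun j => g (B * S T + j)%nat) = INR B * pp ^ S T).
      { rewrite <- rsum_const. apply rsum_ext; intros k Hk. unfold g.
        replace (Nat.ltb (B * S T + k) n) with false
          by (symmetry; apply Nat.ltb_ge; unfold B in *; nia).
        rewrite Nat.mul_comm, Nat.div_add_l, Nat.div_small by (unfold B in *; lia).
        replace (Nat.max 1 (S T + 0)) with (S T) by lia. reflexivity. }
      rewrite E2. unfold B in *. rewrite mult_INR. simpl INR at 1.
      assert (0 <= pp ^ S T) by (apply pow_le; lra).
      replace (pp ^ S (S T)) with (pp * pp ^ S T) by reflexivity.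
      assert (0 <= (1/2 - pp) * (INR n * pp ^ S T)) by (apply Rmult_le_pos; nra).
      nra. }
  apply Rle_trans with (rsum (S N) g); [apply rsum_le; auto|].
  apply Rle_trans with (rsum (B * S N) g); [apply rsum_mono_len; auto; unfold B; nia|].
  assert (H := Hblocks N). assert (0 <= pp ^ S N) by (apply pow_le; lra). nra.
Qed.

Lemma ceiling_nat (A : R) : 0 < A -> exists h, (1 <= h)%nat /\ A <= INR h <= A + 1.
Proof.
  intros HA. destruct (archimed A) as [Hu1 Hu2].
  assert (Hup : (0 < up A)%Z) by (apply lt_IZR; simpl; lra).
  exists (Z.to_nat (up A)).
  rewrite INR_IZR_INZ, Z2Nat.id by lia. split; [lia|lra].
Qed.

(** Pathwise dynamics of the IPT while windows are short.  [BD] is a window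
    length below which the divergence threshold vanishes. *)

Section Dynamics.
Variable m : nat.
Variable f0 : nat -> R.
Variable q : (nat -> R) -> R.
Variable cS : R.
Variable cD : nat -> R.
Variable fstar : nat -> nat -> R.
Variable sel : nat -> list nat -> nat.
Variable BD : R.
Hypothesis HcS : 0 < cS.
Hypothesis HcD0 : forall n, INR n <= BD -> cD n = 0.
Hypothesis Hfstar : forall n, (1 <= n)%nat -> is_argmin m q f0 (cS / INR n) (fstar n).
Hypothesis Hsel : is_max_selector q sel.

Definition run k xs := ipt_state m q cS cD fstar sel k xs.

Lemma run_S k xs : run (S k) xs =
  let (stopped, tau) := run k xs in
      if stopped then (true, tau)
      else
        let pre := firstn (S k) xs in
        let ik := sel tau pre in
        let nk := (S k + 1 - ik)%nat in
        let Sk := Qstat q ik (S k) pre in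
        let Dge := ext_geb (KL m (emp (window ik (S k) pre)) (fstar nk)) (cD nk) in
        if Rle_dec cS Sk then
          (if Dge then (true, tau) else (false, (S k + 1)%nat))
        else (false, tau).
Proof. reflexivity. Qed.

Lemma run_tau_range k xs : (1 <= snd (run k xs) <= k + 1)%nat.
Proof.
  induction k; [simpl; lia|]. rewrite run_S. destruct (run k xs) as [st tau]; simpl in *.
  destruct st; simpl; [lia|].
  destruct (Rle_dec _ _); [destruct (ext_geb _ _)|]; simpl; lia.
Qed.

Lemma run_stopped_mono k k' xs : (k <= k')%nat ->
  fst (run k xs) = true -> fst (run k' xs) = true.
Proof.
  induction 1; auto. intros Hk. specialize (IHle Hk). revert IHle.
  rewrite run_S. destruct (run m0 xs) as [st tau]; simpl. intros ->. reflexivity.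
Qed.

Lemma not_stopped_before k k' xs : (k <= k')%nat ->
  fst (run k' xs) = false -> fst (run k xs) = false.
Proof.
  intros Hk H. destruct (fst (run k xs)) eqn:E; auto.
  rewrite (run_stopped_mono k k' xs Hk E) in H. congruence.
Qed.

Lemma selected_is_max k xs i : (S k <= length xs)%nat ->
  (snd (run k xs) <= i <= S k + 1)%nat ->
  Qstat q i (S k) (firstn (S k) xs)
  <= Qstat q (sel (snd (run k xs)) (firstn (S k) xs)) (S k) (firstn (S k) xs).
Proof.
  intros Hl Hi.
  assert (Hlp : length (firstn (S k) xs) = S k) by (rewrite firstn_length_le; auto).
  assert (Ht := run_tau_range k xs).
  destruct (Hsel (snd (run k xs)) (firstn (S k) xs)) as [_ H]; [lia|].
  rewrite Hlp in H. apply H. lia.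
Qed.

(* If the selected window crosses c^S and is at most BD long, then
   D_k >= 0 = c^D (Gibbs), so the divergence test passes. *)
Lemma divergence_test_passes k xs : (S k <= length xs)%nat ->
  (forall a, In a xs -> (a < m)%nat) ->
  let tau := snd (run k xs) in
  let pre := firstn (S k) xs in
  let ik := sel tau pre in
  let nk := (S k + 1 - ik)%nat in
  cS <= Qstat q ik (S k) pre -> INR (S k + 1 - tau) <= BD ->
  ext_geb (KL m (emp (window ik (S k) pre)) (fstar nk)) (cD nk) = true.
Proof.
  intros Hl Hm tau pre ik nk HQ HB.
  assert (Hlp : length pre = S k) by (unfold pre; rewrite firstn_length_le; auto).
  assert (Ht := run_tau_range k xs). fold tau in Ht.
  destruct (Hsel tau pre) as [Hik _]; [lia|]. fold ik in Hik.
  unfold Qstat in HQ. destruct (Nat.leb ik (S k)) eqn:Hle; [|lra].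
  apply Nat.leb_le in Hle. fold nk in HQ.
  set (w := window ik (S k) pre) in *.
  assert (Hlw : length w = nk).
  { unfold w, window. rewrite firstn_length_le; auto. rewrite length_skipn. lia. }
  assert (Hnk : (1 <= nk)%nat) by (unfold nk; lia).
  assert (Hw : is_pmf m (emp w)).
  { apply emp_pmf.
    - intros E; rewrite E in Hlw; simpl in Hlw; lia.
    - intros a Ha. apply Hm. unfold w, window, pre in Ha.
      apply in_firstn_in, in_skipn_in, in_firstn_in in Ha. auto. }
  assert (HnkR : 0 < INR nk) by (apply lt_0_INR; lia).
  assert (Hq : cS / INR nk <= q (emp w)).
  { unfold Rdiv. apply Rmult_le_reg_l with (INR nk); auto.
    replace (INR nk * (cS * / INR nk)) with cS by (field; lra). auto. }
  destruct (Hfstar nk Hnk) as [Hfs _]; [exists (emp w); auto|].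
  rewrite HcD0; [apply gibbs; auto|].
  apply Rle_trans with (INR (S k + 1 - tau)); auto. apply le_INR. unfold nk; lia.
Qed.

Lemma short_crossing_stops k xs i : (S k <= length xs)%nat ->
  (forall a, In a xs -> (a < m)%nat) ->
  fst (run k xs) = false -> (snd (run k xs) <= i <= S k)%nat ->
  cS <= Qstat q i (S k) (firstn (S k) xs) -> INR (S k + 1 - snd (run k xs)) <= BD ->
  fst (run (S k) xs) = true.
Proof.
  intros Hl Hm Hst Hi HQ HB.
  assert (HQ' := selected_is_max k xs i Hl ltac:(lia)).
  assert (HD := divergence_test_passes k xs Hl Hm ltac:(cbv zeta; lra) HB).
  rewrite run_S. destruct (run k xs) as [st tau]. simpl in *. subst st.
  destruct (Rle_dec _ _); [|lra]. rewrite HD. reflexivity.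
Qed.

Lemma crossing_stops_or_restarts k xs i : (S k <= length xs)%nat ->
  fst (run k xs) = false -> (snd (run k xs) <= i <= S k)%nat ->
  cS <= Qstat q i (S k) (firstn (S k) xs) ->
  fst (run (S k) xs) = true \/ run (S k) xs = (false, S k + 1)%nat.
Proof.
  intros Hl Hst Hi HQ.
  assert (HQ' := selected_is_max k xs i Hl ltac:(lia)).
  rewrite run_S. destruct (run k xs) as [st tau]. simpl in *. subst st.
  destruct (Rle_dec _ _); [|lra]. destruct (ext_geb _ _); auto.
Qed.

Lemma restart_needs_long_window k xs : (S k <= length xs)%nat ->
  (forall a, In a xs -> (a < m)%nat) ->
  fst (run (S k) xs) = false -> snd (run (S k) xs) <> snd (run k xs) ->
  snd (run (S k) xs) = (S k + 1)%nat /\ BD < INR (S k + 1 - snd (run k xs)).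
Proof.
  intros Hl Hm Hst Hne.
  assert (HD := divergence_test_passes k xs Hl Hm). cbv zeta in HD.
  revert Hst Hne HD. rewrite run_S. destruct (run k xs) as [st tau]. cbn [fst snd].
  destruct st; intros Hst Hne HD; [discriminate|].
  destruct (Rle_dec (INR (S k + 1 - tau)) BD) as [HB|HB].
  - destruct (Rle_dec _ _) as [Hc|Hc]; [rewrite (HD Hc HB) in Hst|]; cbn in *; congruence.
  - split; [|apply Rnot_le_lt; exact HB].
    revert Hne. destruct (Rle_dec _ _); [destruct (ext_geb _ _)|]; cbn; congruence.
Qed.

Section Windows.
Variables n h l : nat.
Hypothesis Hn : n = (l * h)%nat.
Hypothesis Hl1 : (1 <= l)%nat.
Hypothesis Hh1 : (1 <= h)%nat.
Hypothesis HBD : INR ((l + 1) * h) <= BD.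

Definition crossing (j : nat) (xs : list nat) : Prop :=
  cS <= INR n * q (emp (firstn n (skipn (j * h) xs))).

Lemma n_pos : (1 <= n)%nat.
Proof. rewrite Hn. nia. Qed.

Lemma crossing_Qstat j xs : crossing j xs ->
  cS <= Qstat q (j * h + 1) (j * h + n) (firstn (j * h + n) xs).
Proof.
  intros Hg. assert (Hn1 := n_pos). unfold Qstat, window.
  replace (Nat.leb (j * h + 1) (j * h + n)) with true by (symmetry; apply Nat.leb_le; lia).
  replace (j * h + n + 1 - (j * h + 1))%nat with n by lia.
  replace (j * h + 1 - 1)%nat with (j * h)%nat by lia.
  rewrite window_firstn by lia. exact Hg.
Qed.

(* After a restart at r + 1, the window stays at most (l+1) h long until
   r + n + h, so no further restart happens, and a crossing window starting
   in [r, r + h) stops the test by its end. *)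
Lemma stops_after_fresh_restart xs r i : (i * h + n <= length xs)%nat ->
  (forall a, In a xs -> (a < m)%nat) ->
  (r <= i * h)%nat -> (i * h < r + h)%nat ->
  fst (run r xs) = false -> snd (run r xs) = S r -> crossing i xs ->
  fst (run (i * h + n) xs) = true.
Proof.
  intros Hl Hm Hr1 Hr2 Hst Htau Hg. assert (Hn1 := n_pos).
  set (e := (i * h + n)%nat) in *.
  destruct (fst (run e xs)) eqn:He; auto. exfalso.
  assert (Hshort : forall d, (d < n + h)%nat -> INR d <= BD).
  { intros d Hd. apply Rle_trans with (INR ((l + 1) * h)); auto. apply le_INR. nia. }
  assert (Hkeep : forall d, (r + d < e)%nat -> snd (run (r + d) xs) = S r).
  { induction d; intros Hd; [rewrite Nat.add_0_r; auto|]. rewrite Nat.add_succ_r.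
    destruct (Nat.eq_dec (snd (run (S (r + d)) xs)) (snd (run (r + d) xs))) as [E|E].
    - rewrite E. apply IHd. lia.
    - destruct (restart_needs_long_window (r + d) xs ltac:(lia) Hm
                  (not_stopped_before (S (r + d)) e xs ltac:(lia) He) E) as [_ HB].
      rewrite IHd in HB by lia.
      assert (INR (S (r + d) + 1 - S r) <= BD) by (apply Hshort; lia). lra. }
  destruct e as [|k] eqn:Ee; [lia|].
  assert (Hk := Hkeep (k - r)%nat ltac:(lia)). replace (r + (k - r))%nat with k in Hk by lia.
  assert (HQ := crossing_Qstat i xs Hg). unfold e in Ee. rewrite Ee in HQ.
  rewrite (short_crossing_stops k xs (i * h + 1) ltac:(lia) Hm
             (not_stopped_before k (S k) xs ltac:(lia) He)) in He;
    [congruence | rewrite Hk; lia | exact HQ | rewrite Hk; apply Hshort; lia].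
Qed.

Lemma first_exceedance (u : nat -> nat) c k : (u 0 <= c)%nat -> (c < u k)%nat ->
  exists k', (k' < k)%nat /\ (u k' <= c)%nat /\ (c < u (S k'))%nat.
Proof.
  intros H0. induction k; intros Hk; [lia|].
  destruct (le_lt_dec (u k) c) as [H1|H1]; [exists k; auto|].
  destruct (IHk H1) as [k' [? ?]]. exists k'; split; [lia|auto].
Qed.

(* If the j-th window crosses but the test has not stopped by its end, a
   restart occurred in [jh, jh + n]: otherwise the current window would
   contain the crossing one and the test would either stop or restart. *)
Lemma restart_before_window_end xs j : (j * h + n <= length xs)%nat ->
  (forall a, In a xs -> (a < m)%nat) ->
  crossing j xs -> fst (run (j * h + n) xs) = false ->
  exists r, (j * h <= r <= j * h + n)%nat /\ fst (run r xs) = false /\ snd (run r xs) = S r.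
Proof.
  intros Hl Hm Hg He. assert (Hn1 := n_pos).
  remember (j * h + n)%nat as e eqn:Ee.
  destruct e as [|k]; [lia|].
  destruct (le_lt_dec (snd (run k xs)) (j * h + 1)) as [Hle|Hlt].
  - assert (HQ := crossing_Qstat j xs Hg). rewrite <- Ee in HQ.
    destruct (crossing_stops_or_restarts k xs (j * h + 1) ltac:(lia)
                (not_stopped_before k (S k) xs ltac:(lia) He) ltac:(split; lia) HQ) as [E|E];
      [congruence|].
    exists (S k). rewrite E. cbn [fst snd]. repeat split; lia.
  - destruct (first_exceedance (fun k => snd (run k xs)) (j * h + 1) k ltac:(cbn; lia) Hlt)
      as [k' [Hk' [H1 H2]]].
    destruct (restart_needs_long_window k' xs ltac:(lia) Hm
                (not_stopped_before (S k') (S k) xs ltac:(lia) He) ltac:(lia)) as [HT _].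
    exists (S k'). split; [lia|]. split; [apply (not_stopped_before _ (S k)); auto; lia|].
    rewrite HT; lia.
Qed.

Lemma multiple_in_range r : exists i, (r <= i * h /\ i * h < r + h)%nat.
Proof.
  exists ((r + h - 1) / h)%nat.
  assert (E := Nat.div_mod (r + h - 1) h ltac:(lia)).
  assert (M := Nat.mod_upper_bound (r + h - 1) h ltac:(lia)).
  rewrite Nat.mul_comm. lia.
Qed.

(* If the windows j, ..., j + l all cross, the test stops by time (j+2l) h:
   the restart produced by window j is followed within h by the start of one
   of these windows, which then stops the test. *)
Lemma crossings_force_stop xs j : ((j + 2 * l) * h <= length xs)%nat ->
  (forall a, In a xs -> (a < m)%nat) ->
  (forall i, (i <= l)%nat -> crossing (j + i) xs) -> fst (run ((j + 2 * l) * h) xs) = true.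
Proof.
  intros Hl Hm Hg. assert (Hn1 := n_pos).
  destruct (fst (run ((j + 2 * l) * h) xs)) eqn:He; auto. exfalso.
  assert (Hg0 := Hg 0%nat ltac:(lia)). rewrite Nat.add_0_r in Hg0.
  destruct (restart_before_window_end xs j ltac:(nia) Hm Hg0
              (not_stopped_before (j * h + n) ((j + 2 * l) * h) xs ltac:(nia) He))
    as [r [Hr [Hst Htau]]].
  destruct (multiple_in_range r) as [i [Hi1 Hi2]].
  assert (Hj1 : (j <= i)%nat) by nia.
  assert (Hj2 : (i <= j + l)%nat) by nia.
  assert (Hgi : crossing i xs) by (replace i with (j + (i - j))%nat by lia; apply Hg; lia).
  assert (HG := stops_after_fresh_restart xs r i ltac:(nia) Hm Hi1 Hi2 Hst Htau Hgi).
  rewrite (not_stopped_before (i * h + n) ((j + 2 * l) * h) xs ltac:(nia) He) in HG. discriminate.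
Qed.

Lemma first_crossing_stops xs : (n <= length xs)%nat -> (forall a, In a xs -> (a < m)%nat) ->
  crossing 0 xs -> fst (run n xs) = true.
Proof.
  intros Hl Hm Hg.
  exact (stops_after_fresh_restart xs 0 0 ltac:(simpl; lia) Hm ltac:(lia) ltac:(lia)
           eq_refl eq_refl Hg).
Qed.

Variable f1 : nat -> R.
Hypothesis Hf1 : is_pmf m f1.
Variables Lip gam q1' : R.
Hypothesis HLip : lipschitz_l1 m q Lip.
Hypothesis Hgam : 0 < gam.
Hypothesis Hcond : (Rabs Lip + 1) * INR m * gam <= q f1 - q1'.
Hypothesis Hnq : cS <= INR n * q1'.

Lemma nR_pos : 0 < INR n.
Proof. apply lt_0_INR. assert (H := n_pos). lia. Qed.

(* Chebyshev weight of a window of length n: it is at least 1 on every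
   non-crossing window, and its mean is at most m / (n gam^2). *)
Definition cheb (ys : list nat) : R :=
  rsum m (fun a => (dev f1 a ys) ^ 2) / (INR n * gam) ^ 2.

Lemma cheb_nonneg ys : 0 <= cheb ys.
Proof.
  unfold cheb. assert (H := nR_pos). apply Rmult_le_pos.
  - apply rsum_nonneg; intros; apply pow2_ge_0.
  - apply Rlt_le, Rinv_0_lt_compat. apply pow_lt. nra.
Qed.

Lemma cheb_ge1 ys : length ys = n -> (forall a, In a ys -> (a < m)%nat) ->
  ~ (cS <= INR n * q (emp ys)) -> 1 <= cheb ys.
Proof.
  intros Hl Hm Hnot. assert (Hn0 := nR_pos).
  apply Rnot_lt_le. intros Hlt. apply Hnot.
  assert (Hng2 : 0 < (INR n * gam) ^ 2) by (apply pow_lt; nra).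
  assert (Hs : rsum m (fun a => dev f1 a ys ^ 2) < (INR n * gam) ^ 2).
  { unfold cheb in Hlt. apply Rmult_lt_reg_r with (/ (INR n * gam) ^ 2);
      [apply Rinv_0_lt_compat; auto|]. rewrite Rinv_r; lra. }
  assert (Hclose : forall a, (a < m)%nat -> Rabs (emp ys a - f1 a) <= gam).
  { intros a Ha.
    assert (E : emp ys a - f1 a = dev f1 a ys / INR n) by (unfold emp, dev; rewrite Hl; field; lra).
    rewrite E. unfold Rdiv. rewrite Rabs_mult, Rabs_inv, (Rabs_right (INR n)) by lra.
    apply Rmult_le_reg_r with (INR n); auto. rewrite Rmult_assoc, Rinv_l, Rmult_1_r by lra.
    rewrite Rmult_comm. apply (coord_le_of_sum_sq m (fun a => dev f1 a ys)); auto; nra. }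
  assert (Hpe : is_pmf m (emp ys)).
  { apply emp_pmf; auto. intros E; rewrite E in Hl; simpl in Hl. assert (Hn1 := n_pos). lia. }
  assert (q1' <= q (emp ys)) by (apply (lipschitz_lower_bound m q Lip f1 _ gam); auto).
  apply Rle_trans with (INR n * q1'); auto. apply Rmult_le_compat_l; lra.
Qed.

Lemma Ex_cheb : Ex m f1 n cheb <= INR m / (INR n * gam ^ 2).
Proof.
  assert (Hn0 := nR_pos). unfold cheb, Rdiv at 1.
  transitivity (Ex m f1 n (fun ys => / (INR n * gam) ^ 2 * rsum m (fun a => dev f1 a ys ^ 2)));
    [apply Req_le, Ex_ext; intros; ring|].
  rewrite Ex_scal, (Ex_rsum m f1 Hf1).
  assert (rsum m (fun i => Ex m f1 n (fun ys => dev f1 i ys ^ 2)) <= INR m * INR n).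
  { rewrite <- rsum_const. apply rsum_le. intros a Ha. apply Ex_dev_sq; auto. }
  apply Rle_trans with (/ (INR n * gam) ^ 2 * (INR m * INR n)).
  - apply Rmult_le_compat_l; auto. apply Rlt_le, Rinv_0_lt_compat, pow_lt; nra.
  - right. field. split; lra.
Qed.

Lemma prob_not_stopped_Ex k : prob_not_stopped m q cS cD fstar sel f1 k =
  Ex m f1 k (fun xs => if fst (run k xs) then 0 else 1).
Proof.
  unfold prob_not_stopped, Ex, lsum, run. f_equal. apply map_ext. intros xs.
  destruct (fst _); ring.
Qed.

Lemma prob_not_stopped_le1 k : prob_not_stopped m q cS cD fstar sel f1 k <= 1.
Proof.
  rewrite prob_not_stopped_Ex. apply Rle_trans with (Ex m f1 k (fun _ => 1)).
  - apply Ex_le; auto. intros; destruct (fst _); lra.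
  - rewrite Ex_one; auto; lra.
Qed.

(* After the first window, running requires a non-crossing first window. *)
Lemma prob_after_first_window k : (n <= k)%nat ->
  prob_not_stopped m q cS cD fstar sel f1 k <= Ex m f1 n cheb.
Proof.
  intros Hk. rewrite prob_not_stopped_Ex.
  rewrite <- (Ex_marg m f1 Hf1 n (k - n) cheb). replace (n + (k - n))%nat with k by lia.
  apply Ex_le; auto. intros xs Hl Hm.
  destruct (fst (run k xs)) eqn:E; [apply cheb_nonneg|].
  apply cheb_ge1.
  - rewrite firstn_length_le; lia.
  - intros a Ha; apply Hm; apply in_firstn_in in Ha; auto.
  - intros Hg. assert (HS := first_crossing_stops xs ltac:(lia) Hm ltac:(exact Hg)).
    rewrite (run_stopped_mono n k xs Hk HS) in E. congruence.
Qed.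

(* A block of 2n observations fails to contain l+1 crossing windows with
   probability at most E[blk], where blk sums the l+1 Chebyshev weights. *)
Definition blk_len : nat := (2 * n)%nat.

Definition block (b : nat) (xs : list nat) : list nat := firstn blk_len (skipn (b * blk_len) xs).

Definition blk (ys : list nat) : R := rsum (S l) (fun i => cheb (firstn n (skipn (i * h) ys))).

Lemma blk_nonneg ys : 0 <= blk ys.
Proof. apply rsum_nonneg; intros; apply cheb_nonneg. Qed.

(* Each window of a block is a shift of the first window in law. *)
Lemma Ex_blk : Ex m f1 blk_len blk <= INR (S l) * Ex m f1 n cheb.
Proof.
  unfold blk. rewrite (Ex_rsum m f1 Hf1), <- rsum_const. apply Req_le, rsum_ext. intros i Hi.
  assert (HiB : (i * h + n <= blk_len)%nat) by (unfold blk_len; nia).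
  replace blk_len with (i * h + (n + (blk_len - i * h - n)))%nat by lia.
  rewrite (Ex_shift m f1 Hf1 (i * h) (n + (blk_len - i * h - n)) (fun zs => cheb (firstn n zs))).
  exact (Ex_marg m f1 Hf1 n _ _).
Qed.

Fixpoint blk_prod (b : nat) (xs : list nat) : R :=
  match b with
  | O => 1
  | S b' => blk_prod b' (firstn (b' * blk_len) xs) * blk (block b' xs)
  end.

Lemma blk_prod_nonneg b xs : 0 <= blk_prod b xs.
Proof.
  revert xs; induction b; intros; simpl; [lra|].
  apply Rmult_le_pos; auto. apply blk_nonneg.
Qed.

Lemma blk_prod_firstn b xs K : (b * blk_len <= K)%nat -> blk_prod b (firstn K xs) = blk_prod b xs.
Proof.
  revert xs K; induction b; intros xs K Hk; simpl; auto.
  rewrite firstn_firstn. replace (Init.Nat.min (b * blk_len) K) with (b * blk_len)%nat by lia.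
  unfold block. rewrite window_firstn by lia. reflexivity.
Qed.

Lemma blk_prod_ge1 b xs :
  (forall b', (b' < b)%nat -> 1 <= blk (block b' xs)) -> 1 <= blk_prod b xs.
Proof.
  induction b; intros H; simpl; [lra|]. rewrite blk_prod_firstn by lia.
  assert (1 <= blk_prod b xs) by (apply IHb; intros; apply H; lia).
  assert (1 <= blk (block b xs)) by (apply H; lia). nra.
Qed.

(* Disjoint blocks are independent, so the product has mean E[blk]^b. *)
Lemma Ex_blk_prod b : Ex m f1 (b * blk_len) (blk_prod b) = (Ex m f1 blk_len blk) ^ b.
Proof.
  induction b; [simpl; rewrite Ex_const by auto; reflexivity|].
  replace (S b * blk_len)%nat with (b * blk_len + blk_len)%nat by lia.
  transitivity (Ex m f1 (b * blk_len + blk_len)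
                  (fun xs => blk_prod b (firstn (b * blk_len) xs) * blk (skipn (b * blk_len) xs))).
  - apply Ex_ext; intros xs Hl _. simpl. unfold block. rewrite (firstn_all2 (n := blk_len)); auto.
    rewrite length_skipn. lia.
  - rewrite Ex_fact by auto. rewrite IHb. simpl. ring.
Qed.

(* In a block of weight < 1 every Chebyshev weight is < 1, so the l+1
   windows starting at its multiples of h all cross. *)
Lemma light_block_crosses xs b : ((b + 1) * blk_len <= length xs)%nat ->
  (forall a, In a xs -> (a < m)%nat) -> blk (block b xs) < 1 ->
  forall i, (i <= l)%nat -> crossing (2 * l * b + i) xs.
Proof.
  intros Hl Hm Hlight i Hi. unfold crossing.
  assert (Hw : firstn n (skipn ((2 * l * b + i) * h) xs) = firstn n (skipn (i * h) (block b xs))).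
  { unfold block. rewrite window_firstn by (unfold blk_len; nia). rewrite skipn_skipn.
    f_equal. f_equal. unfold blk_len. rewrite Hn. ring. }
  rewrite Hw. apply Rnot_lt_le. intros Hnot.
  assert (Hc : 1 <= cheb (firstn n (skipn (i * h) (block b xs)))).
  { apply cheb_ge1; [| |lra].
    - rewrite <- Hw, firstn_length_le; auto. rewrite length_skipn. unfold blk_len in *. nia.
    - intros a Ha; apply Hm. unfold block in Ha.
      apply in_firstn_in, in_skipn_in, in_firstn_in, in_skipn_in in Ha; auto. }
  assert (cheb (firstn n (skipn (i * h) (block b xs))) <= blk (block b xs)).
  { apply (rsum_ge_term (S l) (fun i => cheb (firstn n (skipn (i * h) (block b xs))))); [|lia].
    intros; apply cheb_nonneg. }
  lra.
Qed.

(* Running past b blocks forces every block weight to be at least 1: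
   otherwise the block's windows all cross and the test stops. *)
Lemma prob_after_blocks k b : (b * blk_len <= k)%nat ->
  prob_not_stopped m q cS cD fstar sel f1 k <= (Ex m f1 blk_len blk) ^ b.
Proof.
  intros Hk. rewrite prob_not_stopped_Ex, <- Ex_blk_prod.
  rewrite <- (Ex_marg m f1 Hf1 (b * blk_len) (k - b * blk_len) (blk_prod b)).
  replace (b * blk_len + (k - b * blk_len))%nat with k by lia.
  apply Ex_le; auto. intros xs Hl Hm.
  destruct (fst (run k xs)) eqn:E; [apply blk_prod_nonneg|].
  rewrite blk_prod_firstn by lia. apply blk_prod_ge1. intros b' Hb'.
  apply Rnot_lt_le. intros Hlight.
  assert (Hlen : ((b' + 1) * blk_len <= length xs)%nat) by nia.
  assert (HS := crossings_force_stop xs (2 * l * b')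
                  ltac:(unfold blk_len in *; rewrite Hn in *; nia) Hm
                  (light_block_crosses xs b' Hlen Hm Hlight)).
  rewrite (run_stopped_mono ((2 * l * b' + 2 * l) * h) k xs
             ltac:(unfold blk_len in *; rewrite Hn in *; nia) HS) in E.
  discriminate.
Qed.

Lemma expected_delay_bound N : INR (S l) * (INR m / (INR n * gam ^ 2)) <= 1 / 2 ->
  ET_partial m q cS cD fstar sel f1 N
  <= INR n * (1 + 5 * (INR (S l) * (INR m / (INR n * gam ^ 2)))).
Proof.
  set (pp := INR (S l) * (INR m / (INR n * gam ^ 2))). intros Hpp.
  assert (Hn0 := nR_pos).
  assert (Hp0 : 0 <= INR m / (INR n * gam ^ 2)).
  { apply Rmult_le_pos; [apply pos_INR|].
    apply Rlt_le, Rinv_0_lt_compat, Rmult_lt_0_compat; auto. apply pow_lt; auto. }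
  assert (HSl : 1 <= INR (S l)) by (rewrite S_INR; assert (H := pos_INR l); lra).
  assert (Hcheb : Ex m f1 n cheb <= pp).
  { apply Rle_trans with (INR m / (INR n * gam ^ 2)); [apply Ex_cheb|]. unfold pp; nra. }
  assert (Hblk : Ex m f1 blk_len blk <= pp).
  { apply Rle_trans with (INR (S l) * Ex m f1 n cheb); [apply Ex_blk|].
    apply Rmult_le_compat_l; [apply pos_INR|apply Ex_cheb]. }
  assert (Hblk0 : 0 <= Ex m f1 blk_len blk) by (apply Ex_nonneg; auto; intros; apply blk_nonneg).
  apply tail_sum_bound; [apply n_pos | split; [unfold pp; nra | exact Hpp]
                         | apply prob_not_stopped_le1 | |].
  - intros k Hk. eapply Rle_trans; [apply prob_after_first_window; auto | exact Hcheb].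
  - intros b k Hk. eapply Rle_trans; [apply (prob_after_blocks k b Hk)|].
    apply pow_incr; auto.
Qed.

End Windows.

(* With h the ceiling of c^S / (l q1') and n = l h, the bound reads
   E t_I <= c^S / q1' + l + 5 (l+1) m / gam^2. *)
Lemma expected_delay_linear (l : nat) f1 Lip gam q1' : (1 <= l)%nat ->
  is_pmf m f1 -> lipschitz_l1 m q Lip -> 0 < gam -> 0 < q1' ->
  (Rabs Lip + 1) * INR m * gam <= q f1 - q1' ->
  2 * (INR l + 1) * INR m / gam ^ 2 <= cS / q1' ->
  (INR l + 1) * (cS / (INR l * q1') + 1) <= BD ->
  forall N, ET_partial m q cS cD fstar sel f1 N
            <= cS / q1' + INR l + 5 * (INR l + 1) * INR m / gam ^ 2.
Proof.
  intros Hl1 Hf1 HLip Hgam Hq1' Hcond Hlarge Hfit N.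
  assert (HlR : 1 <= INR l) by (apply (le_INR 1) in Hl1; simpl in Hl1; lra).
  assert (Hg2 : 0 < gam ^ 2) by (apply pow_lt; lra).
  destruct (ceiling_nat (cS / (INR l * q1'))) as [h [Hh1 [Hlo Hhi]]];
    [apply Rdiv_lt_0_compat; nra|].
  assert (Hscale : INR l * (cS / (INR l * q1')) = cS / q1') by (field; lra).
  assert (HnR : INR (l * h) = INR l * INR h) by apply mult_INR.
  assert (Hn_lo : cS / q1' <= INR (l * h)) by (rewrite HnR, <- Hscale; nra).
  assert (Hn_hi : INR (l * h) <= cS / q1' + INR l) by (rewrite HnR, <- Hscale; nra).
  assert (HmR : 0 <= INR m) by apply pos_INR.
  assert (Hn0 : 0 < INR (l * h)) by (apply Rlt_le_trans with (cS / q1'); auto;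
                                      apply Rdiv_lt_0_compat; lra).
  assert (HBD : INR ((l + 1) * h) <= BD).
  { rewrite mult_INR, plus_INR. simpl INR at 2. eapply Rle_trans; [|exact Hfit]. nra. }
  assert (Hnq : cS <= INR (l * h) * q1').
  { replace cS with (cS / q1' * q1') by (field; lra). apply Rmult_le_compat_r; lra. }
  assert (Hkey : 2 * (INR l + 1) * INR m <= INR (l * h) * gam ^ 2).
  { replace (2 * (INR l + 1) * INR m) with (2 * (INR l + 1) * INR m / gam ^ 2 * gam ^ 2)
      by (field; lra).
    apply Rmult_le_compat_r; lra. }
  assert (Hpp : INR (S l) * (INR m / (INR (l * h) * gam ^ 2)) <= 1 / 2).
  { rewrite S_INR.
    replace ((INR l + 1) * (INR m / (INR (l * h) * gam ^ 2)))
      with ((INR l + 1) * INR m / (INR (l * h) * gam ^ 2)) by (field; lra).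
    apply Rmult_le_reg_r with (INR (l * h) * gam ^ 2); [nra|].
    unfold Rdiv; rewrite Rmult_assoc, Rinv_l, Rmult_1_r by nra. lra. }
  eapply Rle_trans;
    [exact (expected_delay_bound (l * h) h l eq_refl Hl1 Hh1 HBD f1 Hf1 Lip gam q1'
              HLip Hgam Hcond Hnq N Hpp)|].
  assert (E : INR (l * h) * (1 + 5 * ((INR l + 1) * (INR m / (INR (l * h) * gam ^ 2))))
              = INR (l * h) + 5 * (INR l + 1) * INR m / gam ^ 2) by (field; lra).
  rewrite S_INR, E. lra.
Qed.

End Dynamics.

Lemma pmf_alphabet_nonempty m f : is_pmf m f -> (1 <= m)%nat.
Proof. intros [_ H]. destruct m; [simpl in H; lra | lia]. Qed.

(* With x >= 4 / rho and c^S large, windows of length (x+1) h, where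
   h ~ c^S (x+1) / (x^2 q1), fit into the zero-threshold range
   n <= (1 + rho) c^S / qlow. *)
Lemma window_fits (x rho qlow q1 cS : R) : 1 <= x -> 0 < rho -> 4 / rho <= x ->
  0 < qlow <= q1 -> 4 * (x + 1) * qlow / rho <= cS ->
  (x + 1) * (cS / (x * (q1 * x / (x + 1))) + 1) <= (1 + rho) * cS / qlow.
Proof.
  intros Hx Hrho Hxr [Hql Hq1] HcS.
  assert (HcS0 : 0 < cS) by (eapply Rlt_le_trans; [|exact HcS]; apply Rdiv_lt_0_compat; nra).
  assert (Hrx : 4 <= rho * x)
    by (replace 4 with (rho * (4 / rho)) by (field; lra); apply Rmult_le_compat_l; lra).
  assert (Hsq : (x + 1) ^ 2 <= (1 + 3 * rho / 4) * x ^ 2) by nra.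
  assert (Hc1 : cS / q1 <= cS / qlow).
  { apply Rmult_le_compat_l; [lra|]. apply Rinv_le_contravar; lra. }
  assert (Hlin : x + 1 <= rho / 4 * (cS / qlow)).
  { replace (rho / 4 * (cS / qlow)) with (cS / (4 * qlow / rho)) by (field; lra).
    apply Rmult_le_reg_r with (4 * qlow / rho); [apply Rdiv_lt_0_compat; lra|].
    unfold Rdiv at 2. rewrite Rmult_assoc, Rinv_l, Rmult_1_r; [lra|].
    apply Rgt_not_eq, Rdiv_lt_0_compat; lra. }
  assert (E : (x + 1) * (cS / (x * (q1 * x / (x + 1))))
              = (x + 1) ^ 2 / x ^ 2 * (cS / q1)) by (field; lra).
  assert (Hfac : (x + 1) ^ 2 / x ^ 2 <= 1 + 3 * rho / 4).
  { apply Rmult_le_reg_r with (x ^ 2); [nra|].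
    unfold Rdiv; rewrite Rmult_assoc, Rinv_l, Rmult_1_r by nra. lra. }
  assert (0 <= cS / q1) by (apply Rlt_le, Rdiv_lt_0_compat; lra).
  replace ((1 + rho) * cS / qlow) with ((1 + 3 * rho / 4) * (cS / qlow) + rho / 4 * (cS / qlow))
    by (field; lra).
  rewrite Rmult_plus_distr_l, E, Rmult_1_r.
  apply Rplus_le_compat; [|exact Hlin].
  apply Rle_trans with ((1 + 3 * rho / 4) * (cS / q1)); [apply Rmult_le_compat_r; auto|].
  apply Rmult_le_compat_l; lra.
Qed.

Lemma window_cost (x eps q1 cS : R) : 1 <= x -> 0 < eps -> 0 < q1 -> 2 / (eps * q1) <= x ->
  0 <= cS -> cS / (q1 * x / (x + 1)) <= cS / q1 + cS * eps / 2.
Proof.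
  intros Hx Heps Hq1 Hxe HcS.
  assert (Hex : 2 <= eps * q1 * x).
  { replace 2 with (eps * q1 * (2 / (eps * q1))) by (field; lra).
    apply Rmult_le_compat_l; nra. }
  assert (E : cS / (q1 * x / (x + 1)) = cS / q1 + cS * (1 / (q1 * x))) by (field; lra).
  assert (Hinv : 1 / (q1 * x) <= eps / 2).
  { apply Rmult_le_reg_r with (q1 * x); [nra|].
    replace (1 / (q1 * x) * (q1 * x)) with 1 by (field; lra). nra. }
  rewrite E. apply Rplus_le_compat_l.
  replace (cS * eps / 2) with (cS * (eps / 2)) by field.
  apply Rmult_le_compat_l; auto.
Qed.

Lemma window_ratio_exists rho eps q1 : 0 < rho -> 0 < eps -> 0 < q1 ->
  exists l, (1 <= l)%nat /\ 1 <= INR l /\ 4 / rho <= INR l /\ 2 / (eps * q1) <= INR l.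
Proof.
  intros Hrho Heps Hq1.
  destruct (ceiling_nat (Rmax 1 (Rmax (4 / rho) (2 / (eps * q1))))) as [l [Hl1 [Hl _]]];
    [apply Rlt_le_trans with 1; [lra|apply Rmax_l]|].
  exists l. repeat split; auto; eapply Rle_trans; try exact Hl.
  - apply Rmax_l.
  - eapply Rle_trans; [apply Rmax_l|apply Rmax_r].
  - eapply Rle_trans; [apply Rmax_r|apply Rmax_r].
Qed.

(* All side conditions of [expected_delay_linear] hold for c^S large, with
   q1' = q1 l / (l+1) and gam the largest value allowed by the Lipschitz
   margin, and the resulting bound is at most c^S (1 / q1 + eps). *)
Lemma parameter_choice (m : nat) (Lip qlow rho q1 eps : R) :
  1 <= INR m -> 0 < qlow <= q1 -> 0 < rho -> 0 < eps ->
  exists l q1' gam C, (1 <= l)%nat /\ 0 < gam /\ 0 < q1' /\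
    (Rabs Lip + 1) * INR m * gam <= q1 - q1' /\
    forall cS, C < cS ->
      0 < cS /\ 2 * (INR l + 1) * INR m / gam ^ 2 <= cS / q1' /\
      (INR l + 1) * (cS / (INR l * q1') + 1) <= (1 + rho) * cS / qlow /\
      cS / q1' + INR l + 5 * (INR l + 1) * INR m / gam ^ 2 <= cS * (/ q1 + eps).
Proof.
  intros HmR [Hqlow Hq1] Hrho Heps.
  destruct (window_ratio_exists rho eps q1 Hrho Heps ltac:(lra)) as [l [Hl1 [HlR [Hlr Hle]]]].
  set (q1' := q1 * INR l / (INR l + 1)).
  set (gam := (q1 - q1') / ((Rabs Lip + 1) * INR m)).
  assert (HL0 : 0 <= Rabs Lip) by apply Rabs_pos.
  assert (Hq1' : 0 < q1') by (unfold q1'; apply Rdiv_lt_0_compat; nra).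
  assert (Hgam : 0 < gam).
  { apply Rdiv_lt_0_compat; [|nra]. unfold q1'.
    replace (q1 - q1 * INR l / (INR l + 1)) with (q1 / (INR l + 1)) by (field; lra).
    apply Rdiv_lt_0_compat; lra. }
  set (K0 := INR l + 5 * (INR l + 1) * INR m / gam ^ 2).
  assert (HK0 : 0 < K0) by (unfold K0; assert (0 < gam ^ 2) by (apply pow_lt; lra);
    assert (0 < 5 * (INR l + 1) * INR m / gam ^ 2) by (apply Rdiv_lt_0_compat; nra); lra).
  exists l, q1', gam, (Rmax (4 * (INR l + 1) * qlow / rho)
                         (Rmax (2 * (INR l + 1) * INR m / gam ^ 2 * q1') (2 * K0 / eps))).
  split; [exact Hl1|]. split; [exact Hgam|]. split; [exact Hq1'|].
  split; [right; unfold gam; field; split; lra|].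
  intros cS HcS.
  apply Rmax_Rlt in HcS as [Hc1 HcS]. apply Rmax_Rlt in HcS as [Hc2 Hc3].
  assert (HcS0 : 0 < cS) by (eapply Rlt_trans; [|exact Hc3]; apply Rdiv_lt_0_compat; lra).
  split; [exact HcS0|]. split; [|split].
  - apply Rmult_le_reg_r with q1'; auto.
    replace (cS / q1' * q1') with cS by (field; lra). lra.
  - apply window_fits; auto; lra.
  - assert (Hcost := window_cost (INR l) eps q1 cS HlR Heps ltac:(lra) Hle ltac:(lra)).
    assert (HK0c : K0 <= cS * eps / 2).
    { apply Rmult_le_reg_r with (2 / eps); [apply Rdiv_lt_0_compat; lra|].
      replace (cS * eps / 2 * (2 / eps)) with cS by (field; lra).
      replace (K0 * (2 / eps)) with (2 * K0 / eps) by (field; lra). lra. }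
    replace (cS * (/ q1 + eps)) with (cS / q1 + cS * eps / 2 + cS * eps / 2) by (field; lra).
    unfold K0 in HK0c. fold q1' in Hcost. lra.
Qed.

Theorem lemma3
  (m : nat) (f0 : nat -> R) (q : (nat -> R) -> R) (L qlow rho : R)
  (P1 : (nat -> R) -> Prop)
  (Hf0 : is_pmf m f0)
  (Hqc : quasiconcave m q)
  (HL : lipschitz_l1 m q L)
  (Hq0 : q f0 < 0) (Hqlow : 0 < qlow)
  (HP1 : forall f, P1 f -> is_pmf m f /\ qlow <= q f)
  (HP1ne : exists f, P1 f)
  (Hrho : 0 < rho)
  (cD : R -> nat -> R)
  (HcDnn : forall cS n, 0 < cS -> 0 <= cD cS n)
  (HcD0 : forall cS n, 0 < cS -> INR n <= (1 + rho) * cS / qlow -> cD cS n = 0)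
  (fstar : R -> nat -> nat -> R)
  (Hfstar : forall cS n, 0 < cS -> (1 <= n)%nat ->
              is_argmin m q f0 (cS / INR n) (fstar cS n))
  (sel : nat -> list nat -> nat)
  (Hsel : is_max_selector q sel)
  (f1 : nat -> R) (Hf1 : P1 f1) :
  forall eps, 0 < eps ->
    exists C, forall cS, C < cS ->
      forall N, ET_partial m q cS (cD cS) (fstar cS) sel f1 N <= cS * (/ q f1 + eps).
Proof.
  intros eps Heps.
  destruct (HP1 f1 Hf1) as [Hpmf1 Hq1].
  assert (HmR : 1 <= INR m) by (apply (le_INR 1), (pmf_alphabet_nonempty m f0); auto).
  destruct (parameter_choice m L qlow rho (q f1) eps HmR ltac:(lra) Hrho Heps)
    as [l [q1' [gam [C [Hl1 [Hgam [Hq1' [Hcond Hlarge]]]]]]]].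
  exists C. intros cS HcS N.
  destruct (Hlarge cS HcS) as [HcS0 [Hpp [Hfit Hfinal]]].
  eapply Rle_trans; [|exact Hfinal].
  exact (expected_delay_linear m f0 q cS (cD cS) (fstar cS) sel ((1 + rho) * cS / qlow)
           HcS0 (fun n => HcD0 cS n HcS0) (fun n => Hfstar cS n HcS0) Hsel
           l f1 L gam q1' Hl1 Hpmf1 HL Hgam Hq1' Hcond Hpp Hfit N).
Qed.
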